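(* Let $\mathbf{R}^{\Rightarrow}$ be a finite coherent set of normality conditionals with LM-sequence $(\mathcal{E}_i)_{i\geq 0}$. Then for every $i\geq 0$ with $\mathcal{E}_i\neq\emptyset$, $\mathcal{E}_{i+1}\subsetneq\mathcal{E}_i$.
   Context: Boolean formulas over propositional letters; $\models_{\mathrm{PL}}$ classical entailment. A normality conditional is $A\Rightarrow B$ with $A,B$ Boolean; its body is $b(A\Rightarrow B)=A$. For $X\subseteq\mathbf{R}^{\Rightarrow}$, $\mathrm{m}(X)=\{A\rightarrow B:A\Rightarrow B\in X\}$. $\mathbf{R}^{\Rightarrow}$ is coherent if there is no nonempty $X\subseteq\mathbf{R}^{\Rightarrow}$ with $\mathrm{m}(X)\models_{\mathrm{PL}}\bigwedge_{r\in X}\neg b(r)$. Define $\varepsilon(X)=\{A\Rightarrow B\in\mathbf{R}^{\Rightarrow}:\mathrm{m}(X)\models_{\mathrm{PL}}\neg A\}$ and the LM-sequence by $\mathcal{E}_0=\mathbf{R}^{\Rightarrow}$, $\mathcal{E}_{i+1}=\varepsilon(\mathcal{E}_i)$. *)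

From Stdlib Require Import List.
Import ListNotations.

Inductive form : Type :=
| Var : nat -> form
| Bot : form
| Top : form
| Neg : form -> form
| And : form -> form -> form
| Or  : form -> form -> form
| Imp : form -> form -> form.

Fixpoint sat (v : nat -> bool) (f : form) : Prop :=
  match f with
  | Var p => v p = true
  | Bot => False
  | Top => True
  | Neg a => ~ sat v a
  | And a b => sat v a /\ sat v b
  | Or a b => sat v a \/ sat v b
  | Imp a b => sat v a -> sat v b
  end.

Definition entails (Gamma : form -> Prop) (phi : form) : Prop :=
  forall v, (forall g, Gamma g -> sat v g) -> sat v phi.

Record cond : Type := mkCond { body : form; head : form }.

Definition cset := cond -> Prop.

Definition mat (X : cset) : form -> Prop :=
  fun f => exists r, X r /\ f = Imp (body r) (head r).

(* Conjunction over X of the negated bodies, as a set of premises: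
   a valuation satisfies  /\_{r in X} ~b(r)  iff it satisfies ~b(r) for all r in X.
   m(X) |= /\_{r in X} ~ b(r)  iff  m(X) |= ~ b(r) for every r in X. *)
Definition entails_all_neg_bodies (X : cset) : Prop :=
  forall v, (forall g, mat X g -> sat v g) -> forall r, X r -> sat v (Neg (body r)).

Definition coherent (R : list cond) : Prop :=
  ~ exists X : cset,
      (forall r, X r -> In r R) /\ (exists r, X r) /\ entails_all_neg_bodies X.

Definition eps (R : list cond) (X : cset) : cset :=
  fun r => In r R /\ entails (mat X) (Neg (body r)).

Fixpoint LM (R : list cond) (i : nat) : cset :=
  match i with
  | 0 => fun r => In r R
  | S j => eps R (LM R j)
  end.

Definition cset_nonempty (X : cset) : Prop := exists r, X r.

Definition strict_subset (X Y : cset) : Prop :=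
  (forall r, X r -> Y r) /\ exists r, Y r /\ ~ X r.

From Stdlib Require Import List Classical.

(* The sequence is decreasing because [eps R] is monotone and [LM R 1] is
   contained in [R].  If some nonempty [LM R i] were not shrunk by [eps R],
   every member of it would have its body refuted by the material
   counterparts of [LM R i], so [LM R i] itself would witness incoherence. *)

Definition cset_incl (X Y : cset) : Prop := forall r, X r -> Y r.

Lemma LM_incl (R : list cond) (i : nat) : cset_incl (LM R i) (fun r => In r R).
Proof. destruct i as [|i]; intros r H; [exact H | exact (proj1 H)]. Qed.

Lemma mat_incl (X Y : cset) : cset_incl X Y -> forall f, mat X f -> mat Y f.
Proof. intros HXY f [r [Hr ->]]. exists r. auto. Qed.

Lemma eps_monotone (R : list cond) (X Y : cset) :
  cset_incl X Y -> cset_incl (eps R X) (eps R Y).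
Proof.
  intros HXY r [Hin Hent]. split; [exact Hin |].
  intros v Hv. apply Hent. intros g Hg. apply Hv, (mat_incl X Y HXY), Hg.
Qed.

Lemma LM_succ_incl (R : list cond) (i : nat) : cset_incl (LM R (S i)) (LM R i).
Proof.
  induction i as [|i IH].
  - intros r H. exact (proj1 H).
  - exact (eps_monotone R _ _ IH).
Qed.

Lemma coherent_not_eps_closed (R : list cond) (X : cset) :
  coherent R -> cset_incl X (fun r => In r R) -> cset_nonempty X ->
  ~ cset_incl X (eps R X).
Proof.
  intros Hcoh HXR Hne HXeps. apply Hcoh.
  exists X. split; [exact HXR |]. split; [exact Hne |].
  intros v Hv r Hr. exact (proj2 (HXeps r Hr) v Hv).
Qed.

Theorem fact1 (R : list cond) (Hcoh : coherent R) :
  forall i : nat, cset_nonempty (LM R i) -> strict_subset (LM R (S i)) (LM R i).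
Proof.
  intros i Hne. split; [exact (LM_succ_incl R i) |].
  apply NNPP. intro Hno_new.
  apply (coherent_not_eps_closed R (LM R i) Hcoh (LM_incl R i) Hne).
  intros r Hr. apply NNPP. intro Hout.
  apply Hno_new. exists r. split; assumption.
Qed.
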